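(* Let $m>0$, let $n$ be an odd positive integer, let $\epsilon>0$, and let $V=[-m/2,m/2]$. For every $\epsilon$-differentially private facility location mechanism $\mathcal{M}:V^n\to V$ there exists a dataset $D\in V^n$ such that $$\mathrm{FAIR}(D,\mathcal{M}(D))\ge m/2$$ with probability at least $\frac{1}{1+e^{\epsilon}}$ (over the randomness of $\mathcal{M}$).
   Context: A dataset is $D=(x_1,\dots,x_n)\in V^n$ of agent locations, treated as a multiset and indexed so that $x_1\le x_2\le\dots\le x_n$. Since $n$ is odd, the optimal (social-welfare maximizing) facility location is the median $\mathcal{T}(D)=x_{\lceil n/2\rceil}$. Agent $i$'s utility for a facility at $\ell$ is $-|x_i-\ell|$. The individual loss vector is $\mathrm{LOSS}(D,\ell)_i=-|x_i-\mathcal{T}(D)|+|x_i-\ell|$ and $\mathrm{FAIR}(D,\ell)=\max_{1\le i\le n}\mathrm{LOSS}(D,\ell)_i$. Two datasets are neighboring if, as multisets, they differ in exactly one element (one agent's location is changed). A randomized mechanism $\mathcal{M}:V^n\to V$ is $\epsilon$-differentially private if $\Pr[\mathcal{M}(D)\in S]\le e^{\epsilon}\Pr[\mathcal{M}(D')\in S]$ for all neighboring $D,D'$ and all measurable $S\subseteq V$. *)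

From HB Require Import structures.
From mathcomp Require Import all_boot all_order all_algebra.
From mathcomp Require Import all_classical all_reals all_analysis.
Set Implicit Arguments. Unset Strict Implicit. Unset Printing Implicit Defensive.
Import Order.TTheory GRing.Theory Num.Theory.
Local Open Scope ring_scope.

Section FacilityDefs.
Variable R : realType.

(* optimal location: the median x_{ceil(n/2)} of the sorted dataset
   (1-based), i.e. 0-based index n./2 of the sorted sequence (n odd) *)
Definition median (D : seq R) : R := nth 0 (sort <=%R D) (size D)./2.

Definition loss (D : seq R) (l : R) (x : R) : R :=
  - `|x - median D| + `|x - l|.

(* FAIR(D,l) = max_i LOSS(D,l)_i  (D nonempty; the seed is an element of D) *)
Definition fair (D : seq R) (l : R) : R :=
  \big[Num.max/loss D l (head 0 D)]_(x <- D) loss D l x.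

Definition neighboring (D D' : seq R) : Prop :=
  exists (x y : R) (C : seq R), x != y /\ perm_eq D (x :: C) /\ perm_eq D' (y :: C).

Definition Vset (m : R) : set R := `[- (m / 2), m / 2]%classic.

Definition in_V (m : R) (D : seq R) : Prop := forall x, x \in D -> Vset m x.

End FacilityDefs.

From HB Require Import structures.
From mathcomp Require Import all_boot all_order all_algebra.
From mathcomp Require Import all_classical all_reals all_analysis.
From mathcomp Require Import measurable_realfun lra zify.
Import Order.TTheory GRing.Theory Num.Theory.
Local Open Scope ring_scope.

(* With n = 2k+1 agents, let D1 put k+1 agents at -m/2 and k at m/2, and D2
   the reverse; they are neighbours with medians -m/2 and m/2.  An output
   l >= 0 costs the agent at -m/2 in D1 at least m/2, and an output l <= 0
   costs the agent at m/2 in D2 at least m/2.  Hence, writing S = [0, m/2],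
   1 <= M(D2)(FAIR >= m/2) + M(D2)(S) <= M(D2)(FAIR >= m/2) + e^eps M(D1)(S)
     <= M(D2)(FAIR >= m/2) + e^eps M(D1)(FAIR >= m/2),
   so one of the two probabilities is at least 1/(1 + e^eps). *)

Lemma measurable_bigmaxr d (T : measurableType d) (R : realType) (D : set T)
    (I : Type) (s : seq I) (f : T -> R) (h : I -> T -> R) :
  measurable_fun D f -> (forall i, measurable_fun D (h i)) ->
  measurable_fun D (fun x => \big[Num.max/f x]_(i <- s) h i x).
Proof.
move=> mf mh; elim: s => [|i s IH].
  by under eq_fun do rewrite big_nil.
by under eq_fun do rewrite big_cons; exact: measurable_maxr.
Qed.

Lemma two_measure_lower_bound {d} {T : measurableType d} {R : realType}
    {P1 P2 : {measure set T -> \bar R}} {e : R} {F1 F2 S V : set T} :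
  0 <= e -> measurable F1 -> measurable F2 -> measurable S -> measurable V ->
  (S `<=` F1)%classic -> (V `<=` F2 `|` S)%classic -> P2 V = 1%E ->
  (P2 S <= e%:E * P1 S)%E ->
  ((1 + e)^-1%:E <= P1 F1)%E \/ ((1 + e)^-1%:E <= P2 F2)%E.
Proof.
move=> e0 mF1 mF2 mS mV SF1 VF2S P2V P2S.
set p := (1 + e)^-1.
have [|P1F1] := leP p%:E (P1 F1); first by left.
have [|P2F2] := leP p%:E (P2 F2); first by right.
have cover : (1 <= P2 F2 + e%:E * P1 F1)%E.
  rewrite -P2V; apply: (@le_trans _ _ (P2 (F2 `|` S)%classic)).
    by apply: le_measure VF2S; rewrite inE //; exact: measurableU.
  apply: le_trans (measureU2 _ mF2 mS) _; apply: leeD2l; apply: le_trans P2S _.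
  by apply: lee_wpmul2l; [rewrite lee_fin | apply: le_measure SF1; rewrite inE].
have small : (P2 F2 + e%:E * P1 F1 < 1)%E.
  have -> : 1 = p + e * p :> R.
    by rewrite -[p in p + _]mul1r -mulrDl mulfV // lt0r_neq0 // ltr_wpDr.
  have P1F1_fin : P1 F1 \is a fin_num.
    by rewrite ge0_fin_numE // (lt_trans P1F1) ?ltry.
  rewrite EFinD EFinM; apply: lte_leD => //; first by rewrite fin_numM.
  by apply: lee_wpmul2l; [rewrite lee_fin | exact: ltW].
by have := le_lt_trans cover small; rewrite ltxx.
Qed.

Section FacilityLocation.
Context {R : realType}.

Lemma sorted_nseq_cat (a b : R) i j : a <= b -> sorted <=%R (nseq i a ++ nseq j b).
Proof.
move=> ab; elim: i => [|i IH] /=; first elim: j => //= j IH.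
  by rewrite path_min_sorted // all_nseq lexx orbT.
by rewrite path_min_sorted // all_cat !all_nseq lexx ab !orbT.
Qed.

Lemma median_nseq_cat (a b : R) i j : a <= b -> (0 < i + j)%N ->
  median (nseq i a ++ nseq j b) = if ((i + j)./2 < i)%N then a else b.
Proof.
move=> ab ij_gt0; rewrite /median (sorted_sort le_trans (sorted_nseq_cat _ _ i j ab)).
rewrite size_cat !size_nseq nth_cat size_nseq nth_nseq.
case: ifP => [-> //|half_ge].
by rewrite nth_nseq ifT //; lia.
Qed.

Lemma mem_median (D : seq R) : (0 < size D)%N -> median D \in D.
Proof.
move=> D_gt0; rewrite /median -(mem_sort <=%R); apply: mem_nth.
by rewrite size_sort; move: (size D) D_gt0 => k; lia.
Qed.

Lemma dist_median_le_fair (D : seq R) l : (0 < size D)%N -> `|median D - l| <= fair D l.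
Proof.
move=> D_gt0; have := le_bigmax_seq (loss D l (head 0 D)) (median D) xpredT
  (loss D l) (mem_median _ D_gt0) isT.
by rewrite /loss subrr normr0 oppr0 add0r.
Qed.

Lemma left_majority_fair_ge k (b l : R) : 0 <= b -> 0 <= l ->
  b <= fair (nseq k.+1 (- b) ++ nseq k b) l.
Proof.
move=> b_ge0 l_ge0; apply: le_trans (dist_median_le_fair _ l _); last first.
  by rewrite size_cat size_nseq.
rewrite median_nseq_cat ?ifT; [|lia|lra|by rewrite addSn].
by rewrite ler_normr; apply/orP; right; lra.
Qed.

Lemma right_majority_fair_ge k (b l : R) : 0 <= b -> l <= 0 ->
  b <= fair (nseq k (- b) ++ nseq k.+1 b) l.
Proof.
move=> b_ge0 l_le0; apply: le_trans (dist_median_le_fair _ l _); last first.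
  by rewrite size_cat !size_nseq addnS.
rewrite median_nseq_cat ?ifF; [|lia|lra|by rewrite addnS].
by rewrite ler_normr; apply/orP; left; lra.
Qed.

Lemma measurable_fair_ge (D : seq R) c : measurable [set l | c <= fair D l].
Proof.
have mloss x : measurable_fun setT (fun l => loss D l x).
  apply: measurable_funD => //; apply: measurableT_comp => //.
  exact: measurable_funB.
rewrite -[X in measurable X]setTI; apply: measurable_fun_le => //.
exact: measurable_bigmaxr.
Qed.

Lemma in_V_nseq_cat (m a b : R) i j :
  Vset m a -> Vset m b -> in_V m (nseq i a ++ nseq j b).
Proof. by move=> Va Vb x; rewrite mem_cat => /orP[] /nseqP[-> _]. Qed.

Lemma neighboring_nseq_cat (a b : R) i j : a != b ->
  neighboring (nseq i a ++ nseq j.+1 b) (nseq i.+1 a ++ nseq j b).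
Proof.
move=> ab; exists b, a, (nseq i a ++ nseq j b); split; first by rewrite eq_sym.
by split; rewrite //= -[b :: nseq j b]cat1s perm_catCA.
Qed.

End FacilityLocation.

Theorem theorem5p1 (R : realType) (m : R) (n : nat) (eps : R)
  (M : n.-tuple R -> probability R R) :
  0 < m -> odd n -> 0 < eps ->
  (* the mechanism outputs a location in V *)
  (forall D : n.-tuple R, in_V m D -> M D (Vset m) = 1%E) ->
  (* eps-differential privacy *)
  (forall D D' : n.-tuple R, in_V m D -> in_V m D' -> neighboring D D' ->
     forall S : set R, measurable S -> (S `<=` Vset m)%classic ->
       (M D S <= (expR eps)%:E * M D' S)%E) ->
  exists D : n.-tuple R, in_V m D /\
    ((1 + expR eps)^-1%:E <= M D ([set l : R | (m / 2 <= fair D l)%R])%classic)%E.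
Proof.
move=> m_gt0 odd_n _ MV dp.
set k := n./2; set b := m / 2; set S := `[0, b]%classic.
have b_gt0 : 0 < b by rewrite /b; lra.
have Vnb : Vset m (- b) by rewrite /Vset /= in_itv /= -/b lexx; lra.
have Vb : Vset m b by rewrite /Vset /= in_itv /= -/b lexx; lra.
have size1 : size (nseq k.+1 (- b) ++ nseq k b) == n by rewrite size_cat !size_nseq; lia.
have size2 : size (nseq k (- b) ++ nseq k.+1 b) == n by rewrite size_cat !size_nseq; lia.
pose D1 : n.-tuple R := Tuple size1; pose D2 : n.-tuple R := Tuple size2.
have V1 : in_V m D1 by exact: in_V_nseq_cat.
have V2 : in_V m D2 by exact: in_V_nseq_cat.
have SV : (S `<=` Vset m)%classic.
  by move=> l; rewrite /S /Vset /= !in_itv /= -/b => /andP[? ?]; apply/andP; split; lra.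
have S_fair1 : (S `<=` [set l | b <= fair D1 l])%classic.
  by move=> l; rewrite /S /= in_itv /= => /andP[l_ge0 _]; apply: left_majority_fair_ge; lra.
have V_fair2 : (Vset m `<=` [set l | b <= fair D2 l] `|` S)%classic.
  move=> l; rewrite /Vset /S /= !in_itv /= -/b => /andP[_ l_le].
  have [l_le0|l_gt0] := leP l 0; last by right; apply/andP; split; lra.
  by left; apply: right_majority_fair_ge; lra.
have DP : (M D2 S <= (expR eps)%:E * M D1 S)%E.
  apply: dp => //; last exact: measurable_itv.
  by apply: neighboring_nseq_cat; rewrite lt_eqF // gtrN.
have [] := two_measure_lower_bound (ltW (expR_gt0 eps))
  (measurable_fair_ge D1 b) (measurable_fair_ge D2 b) (measurable_itv _)
  (measurable_itv _) S_fair1 V_fair2 (MV _ V2) DP.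
- by exists D1.
- by exists D2.
Qed.
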